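(* Let $\phi$ be an entanglement-breaking channel acting on $d\times d$ complex matrices, and suppose $\phi$ has a semipositive fixed point, i.e. a nonzero matrix $\rho\ge 0$ with $\det\rho=0$ and $\phi(\rho)=\rho$. Then $\dim\ker\phi\ge 2(d-1)$; in particular $\det\phi=0$.
   Context: A quantum channel is a completely positive, trace-preserving linear map on $\mathcal M(d;\mathbb C)$; it is entanglement-breaking if $(\phi\otimes I)(\rho_{AB})$ is separable for every bipartite state $\rho_{AB}$. The determinant $\det\phi$ is the determinant of $\phi$ regarded as a linear operator on the $d^2$-dimensional space $\mathcal M(d;\mathbb C)$ (the product of its eigenvalues with multiplicity). A matrix is called semipositive if it is positive semidefinite with at least one zero eigenvalue. *)

(* Complex matrices are modelled over an arbitrary
   numClosedFieldType C (algebraically closed field with conjugation and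
   order, e.g. the complex numbers or algC). *)
From HB Require Import structures.
From mathcomp Require Import all_boot all_order all_algebra.
Set Implicit Arguments. Unset Strict Implicit. Unset Printing Implicit Defensive.
Import Order.TTheory GRing.Theory Num.Theory.
Local Open Scope ring_scope.

Section QChannels.
Variable C : numClosedFieldType.

Definition adjmx m n (A : 'M[C]_(m, n)) : 'M[C]_(n, m) :=
  \matrix_(i, j) (A j i)^*.

Definition hermitian n (A : 'M[C]_n) : Prop := adjmx A = A.

Definition psd n (A : 'M[C]_n) : Prop :=
  hermitian A /\ forall v : 'cV[C]_n, 0 <= (adjmx v *m A *m v) 0 0.

Definition semipositive n (A : 'M[C]_n) : Prop :=
  psd A /\ \det A = 0.

Definition is_state n (A : 'M[C]_n) : Prop := psd A /\ \tr A = 1.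

(* bipartite index: 'I_(d * n) ~ 'I_d * 'I_n, inverse of mxvec_index *)
Definition split_idx (d n : nat) (k : 'I_(d * n)) : 'I_d * 'I_n :=
  enum_val (cast_ord (esym (mxvec_cast d n)) k).

(* Kronecker product A (x) B, indices ordered by mxvec_index *)
Definition tensmx d n (A : 'M[C]_d) (B : 'M[C]_n) : 'M[C]_(d * n) :=
  \matrix_(k, l) (A (split_idx k).1 (split_idx l).1 *
                  B (split_idx k).2 (split_idx l).2).

(* the (a,b) block of a bipartite matrix, as an operator on the first factor *)
Definition blockA d n (X : 'M[C]_(d * n)) (a b : 'I_n) : 'M[C]_d :=
  \matrix_(i, j) X (mxvec_index i a) (mxvec_index j b).

(* (phi (x) I_n) *)
Definition ampl d (n : nat) (phi : 'M[C]_d -> 'M[C]_d) (X : 'M[C]_(d * n)) :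
  'M[C]_(d * n) :=
  \matrix_(k, l) phi (blockA X (split_idx k).2 (split_idx l).2)
                     (split_idx k).1 (split_idx l).1.

Arguments ampl {d} n phi X.

Definition completely_positive d (phi : 'M[C]_d -> 'M[C]_d) : Prop :=
  forall (n : nat) (X : 'M[C]_(d * n)), psd X -> psd (ampl n phi X).

Definition trace_preserving d (phi : 'M[C]_d -> 'M[C]_d) : Prop :=
  forall X : 'M[C]_d, \tr (phi X) = \tr X.

Definition quantum_channel d (phi : {linear 'M[C]_d -> 'M[C]_d}) : Prop :=
  completely_positive phi /\ trace_preserving phi.

Definition separable d n (X : 'M[C]_(d * n)) : Prop :=
  exists s : seq (C * 'M[C]_d * 'M[C]_n),
    (forall t, t \in s -> 0 <= t.1.1 /\ is_state t.1.2 /\ is_state t.2) /\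
    X = \sum_(t <- s) t.1.1 *: tensmx t.1.2 t.2.

Definition entanglement_breaking d (phi : {linear 'M[C]_d -> 'M[C]_d}) : Prop :=
  quantum_channel phi /\
  forall (n : nat) (rho : 'M[C]_(d * n)), is_state rho -> separable (ampl n phi rho).

(* phi as a linear operator on the d^2-dimensional space M_d
   (acting on row vectors mxvec X) *)
Definition chmx d (phi : {linear 'M[C]_d -> 'M[C]_d}) : 'M[C]_(d * d) :=
  lin_mx phi.

Definition dim_ker d (phi : {linear 'M[C]_d -> 'M[C]_d}) : nat :=
  \rank (kermx (chmx phi)).

Definition det_ch d (phi : {linear 'M[C]_d -> 'M[C]_d}) : C :=
  \det (chmx phi).

End QChannels.

(* An entanglement-breaking channel has a Holevo form
   phi X = sum_t c_t <B_t, X> A_t  with c_t >= 0 and A_t, B_t positive semidefinite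
   (apply phi (x) I to the maximally entangled state), so as an operator on M_d its
   matrix is sum_t c_t vec(B_t)^T vec(A_t).  Diagonalise the fixed point rho and let
   r be its rank, 0 < r < d.  In rho = sum_t c_t <B_t, rho> A_t every term is
   positive, so an A_t with c_t <B_t, rho> <> 0 vanishes on ker rho, while a B_t
   with <B_t, rho> = 0 vanishes on the conjugate of range rho.  The first kind of
   term lives in an r^2-dimensional space, the transpose of the second kind in a
   (d - r)^2-dimensional one, so rank phi <= r^2 + (d - r)^2 <= d^2 - 2 (d - 1). *)

From Pilot Require Import Defs.
From HB Require Import structures.
From mathcomp Require Import all_boot all_order all_algebra.
From mathcomp Require Import ring zify.
Import Order.TTheory GRing.Theory Num.Theory.
Local Open Scope ring_scope.

Set Implicit Arguments. Unset Strict Implicit. Unset Printing Implicit Defensive.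

Section Adjoint.
Variable C : numClosedFieldType.

Lemma adjmxE m n (A : 'M[C]_(m, n)) : adjmx A = map_mx Num.conj A^T.
Proof. by apply/matrixP => i j; rewrite !mxE. Qed.

Lemma adjmxK m n (A : 'M[C]_(m, n)) : adjmx (adjmx A) = A.
Proof. by apply/matrixP => i j; rewrite !mxE conjCK. Qed.

Lemma adjmx0 m n : adjmx (0 : 'M[C]_(m, n)) = 0.
Proof. by apply/matrixP => i j; rewrite !mxE conjC0. Qed.

Lemma adjmxZ m n (a : C) (A : 'M[C]_(m, n)) : adjmx (a *: A) = a^* *: adjmx A.
Proof. by apply/matrixP => i j; rewrite !mxE rmorphM. Qed.

Lemma adjmxM m n p (A : 'M[C]_(m, n)) (B : 'M[C]_(n, p)) :
  adjmx (A *m B) = adjmx B *m adjmx A.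
Proof. by rewrite !adjmxE trmx_mul map_mxM. Qed.

Lemma adjmx_row m n (A : 'M[C]_(m, n)) i : adjmx (row i A) = adjmx A *m delta_mx i 0.
Proof.
rewrite rowE adjmxM; congr (_ *m _).
by apply/matrixP => a b; rewrite !mxE conjC_nat andbC.
Qed.

Lemma adjmx_conj_row m n (A : 'M[C]_(m, n)) i :
  adjmx (row i (map_mx Num.conj A)) = (row i A)^T.
Proof. by apply/matrixP => a b; rewrite !mxE conjCK. Qed.

Lemma adjmx_unitaryC n (P : 'M[C]_n) : adjmx P *m P = 1%:M ->
  adjmx (map_mx Num.conj P) *m map_mx Num.conj P = 1%:M.
Proof.
move=> PhP; have -> : adjmx (map_mx Num.conj P) = P^T.
  by apply/matrixP => a b; rewrite !mxE conjCK.
have -> : map_mx Num.conj P = (adjmx P)^T by apply/matrixP => a b; rewrite !mxE.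
by rewrite -trmx_mul PhP trmx1.
Qed.

Definition qform n (A : 'M[C]_n) (v : 'cV[C]_n) : C := (adjmx v *m A *m v) 0 0.

Lemma qform_sum n (I : Type) (s : seq I) (k : I -> C) (A : I -> 'M[C]_n) v :
  qform (\sum_(t <- s) k t *: A t) v = \sum_(t <- s) k t * qform (A t) v.
Proof.
rewrite /qform mulmx_sumr mulmx_suml summxE; apply: eq_bigr => t _.
by rewrite -scalemxAr -scalemxAl mxE.
Qed.

End Adjoint.

Section UnitaryDiagonal.
Variables (C : numClosedFieldType) (n : nat) (P : 'M[C]_n) (lam : 'rV[C]_n).
Hypotheses (PhP : adjmx P *m P = 1%:M) (PPh : P *m adjmx P = 1%:M).

Local Notation A := (adjmx P *m diag_mx lam *m P).
Local Notation supp := [pred j | lam 0 j != 0].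
Local Notation null := [pred j | lam 0 j == 0].

Lemma unitary_mul_adj_row j : P *m adjmx (row j P) = delta_mx j 0.
Proof. by rewrite adjmx_row mulmxA PPh mul1mx. Qed.

Lemma diag_mx_mul_delta j : diag_mx lam *m delta_mx j 0 = lam 0 j *: (delta_mx j 0 : 'cV_n).
Proof.
apply/matrixP => a b; rewrite mul_diag_mx !mxE.
by case: eqP => [->|]; rewrite ?mulr1 ?mulr0.
Qed.

Lemma unitary_diag_eigen j : A *m adjmx (row j P) = lam 0 j *: adjmx (row j P).
Proof.
by rewrite -mulmxA unitary_mul_adj_row -mulmxA diag_mx_mul_delta -scalemxAr -adjmx_row.
Qed.

Lemma qform_unitary_diag_row j : qform A (adjmx (row j P)) = lam 0 j.
Proof.
rewrite /qform -mulmxA unitary_diag_eigen -scalemxAr mxE adjmxK.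
by rewrite {1}rowE -mulmxA unitary_mul_adj_row mul_delta_mx mxE !eqxx mulr1.
Qed.

Lemma qform_unitary_diag v :
  qform A v = \sum_j lam 0 j * `|(P *m v) j 0| ^+ 2.
Proof.
rewrite /qform -!mulmxA mulmxA -(adjmxK P) -adjmxM adjmxK mxE.
apply: eq_bigr => j _; rewrite mul_diag_mx !mxE normCK; ring.
Qed.

Lemma unitary_diag_psd_ge0 j : psd A -> 0 <= lam 0 j.
Proof. by move=> A_psd; rewrite -qform_unitary_diag_row; exact: A_psd.2. Qed.

Lemma unitary_diag_psd_ker v : psd A -> qform A v = 0 -> A *m v = 0.
Proof.
move=> A_psd; rewrite qform_unitary_diag => /psumr_eq0P.
have lam_ge0 j := unitary_diag_psd_ge0 j A_psd.
move=> /(_ (fun j _ => mulr_ge0 (lam_ge0 j) (exprn_ge0 2 (normr_ge0 _)))) sum0.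
suff Dv0 : diag_mx lam *m (P *m v) = 0 by rewrite -!mulmxA Dv0 mulmx0.
move: (P *m v) sum0 => u sum0; apply/matrixP => j i; rewrite ord1 mul_diag_mx !mxE.
have /eqP := sum0 j isT.
by rewrite mulf_eq0 sqrf_eq0 normr_eq0 => /orP[] /eqP ->; rewrite ?mul0r ?mulr0.
Qed.

Lemma unitary_diag_det : \det A = \prod_j lam 0 j.
Proof.
by rewrite !det_mulmx mulrAC -det_mulmx PhP det1 mul1r det_diag.
Qed.

Lemma unitary_diag_supp_gt0 : A != 0 -> (0 < #|supp|)%N.
Proof.
case: (pickP supp) => [j lam_n0 _|lam0]; first by apply/card_gt0P; exists j.
suff -> : diag_mx lam = 0 by rewrite mulmx0 mul0mx eqxx.
by apply/matrixP => a b; move/negbFE/eqP: (lam0 a); rewrite !mxE => ->; rewrite mul0rn.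
Qed.

Lemma unitary_diag_null_gt0 : \det A = 0 -> (0 < #|null|)%N.
Proof.
by rewrite unitary_diag_det => /eqP/prodf_eq0[j _ lam0]; apply/card_gt0P; exists j.
Qed.

End UnitaryDiagonal.

Lemma hermitian_unitary_diag (C : numClosedFieldType) n (A : 'M[C]_n) :
  adjmx A = A -> exists (P : 'M[C]_n) (lam : 'rV[C]_n),
  [/\ adjmx P *m P = 1%:M, P *m adjmx P = 1%:M & A = adjmx P *m diag_mx lam *m P].
Proof.
move=> hA; have Pu := spectral_unitarymx A.
have normal : A \is normalmx by apply/normalmxP; rewrite -adjmxE hA.
exists (spectralmx A), (spectral_diag A); split.
- by rewrite adjmxE -invmx_unitary // mulVmx // unitarymx_unit.
- by move/unitarymxP: Pu; rewrite adjmxE.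
- by rewrite {1}(orthomx_spectralP normal) invmx_unitary // adjmxE.
Qed.

Lemma psd_ker (C : numClosedFieldType) n (A : 'M[C]_n) v :
  psd A -> qform A v = 0 -> A *m v = 0.
Proof.
move=> A_psd; have [P [lam [PhP PPh Adiag]]] := hermitian_unitary_diag A_psd.1.
by rewrite Adiag in A_psd *; apply: unitary_diag_psd_ker.
Qed.

Lemma mxrank_sumsmx_le (F : fieldType) (I : finType) (P : pred I) m (A : I -> 'M[F]_m) :
  (\rank (\sum_(i | P i) A i)%MS <= \sum_(i | P i) \rank (A i))%N.
Proof.
elim/big_ind2: _ => [|B b B' b' rB rB'|i _]; first by rewrite mxrank0.
  by apply: leq_trans (mxrank_adds_leqif B B').1 _; rewrite leq_add.
exact: leqnn.
Qed.

Section Frame.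
Variables (C : numClosedFieldType) (n : nat) (U : 'M[C]_n) (S : pred 'I_n).
Hypothesis UhU : adjmx U *m U = 1%:M.

Lemma unitary_expand M : M =
  \sum_i \sum_j (row i U *m M *m adjmx (row j U)) 0 0 *: (adjmx (row i U) *m row j U).
Proof.
have {1}-> : M = adjmx U *m (U *m M *m adjmx U) *m U.
  by rewrite !mulmxA UhU mul1mx -mulmxA UhU mulmx1.
rewrite [U *m M *m adjmx U]matrix_sum_delta mulmx_sumr mulmx_suml.
apply: eq_bigr => i _; rewrite mulmx_sumr mulmx_suml; apply: eq_bigr => j _.
rewrite -scalemxAr -scalemxAl; congr (_ *: _).
  by rewrite adjmx_row mulmxA -!row_mul -colE !mxE.
by rewrite adjmx_row rowE -mulmxA (mulmxA _ _ U) mul_delta_mx !mulmxA.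
Qed.

Definition frame_space : 'M[C]_(n * n) :=
  (\sum_(i | S i) \sum_(j | S j) <<mxvec (adjmx (row i U) *m row j U)>>)%MS.

Lemma mxrank_frame_space : (\rank frame_space <= #|S| * #|S|)%N.
Proof.
apply: leq_trans (mxrank_sumsmx_le _ _) _.
rewrite -sum_nat_const; apply: leq_sum => i _.
apply: leq_trans (mxrank_sumsmx_le _ _) _.
rewrite -sum1_card; apply: leq_sum => j _.
by rewrite genmxE rank_leq_row.
Qed.

Lemma hermitian_sub_frame_space M : adjmx M = M ->
  (forall j, ~~ S j -> M *m adjmx (row j U) = 0) -> (mxvec M <= frame_space)%MS.
Proof.
move=> hM Mker; rewrite [M]unitary_expand linear_sum; apply: summx_sub => i _.
rewrite linear_sum; apply: summx_sub => j _; rewrite linearZ /=.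
have [Si|nSi] := boolP (S i); last first.
  have -> : row i U *m M = 0.
    by rewrite -[M]hM -[row i U]adjmxK -adjmxM Mker // adjmx0.
  by rewrite !mul0mx mxE scale0r sub0mx.
have [Sj|nSj] := boolP (S j); last first.
  by rewrite -mulmxA Mker // mulmx0 mxE scale0r sub0mx.
apply/scalemx_sub/(sumsmx_sup i) => //; apply: (sumsmx_sup j) => //.
by rewrite genmxE.
Qed.

End Frame.

Lemma split_idx_mxvec m n (i : 'I_m) (a : 'I_n) : split_idx (mxvec_index i a) = (i, a).
Proof. by rewrite /split_idx /mxvec_index cast_ordK enum_rankK. Qed.

Lemma mxvec_split_idx m n (k : 'I_(m * n)) :
  mxvec_index (split_idx k).1 (split_idx k).2 = k.
Proof. by rewrite /split_idx /mxvec_index -surjective_pairing enum_valK cast_ordKV. Qed.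

Lemma big_mxvec_index (R : nmodType) m n (F : 'I_(m * n) -> R) :
  \sum_(k < m * n) F k = \sum_(i < m) \sum_(j < n) F (mxvec_index i j).
Proof.
rewrite pair_big /= (reindex (fun p : 'I_m * 'I_n => mxvec_index p.1 p.2)) //.
exists (@split_idx m n) => [p _|k _]; last exact: mxvec_split_idx.
by rewrite split_idx_mxvec -surjective_pairing.
Qed.

Lemma psd_scale_rank_one (C : numClosedFieldType) n (c : C) (v : 'cV[C]_n) : 0 <= c -> psd (c *: (v *m adjmx v)).
Proof.
move=> c_ge0; split.
  by rewrite /Defs.hermitian adjmxZ adjmxM adjmxK geC0_conj.
move=> x; set y := adjmx x *m v.
have -> : (adjmx x *m (c *: (v *m adjmx v)) *m x) 0 0 = c * `|y 0 0| ^+ 2.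
  rewrite -scalemxAr -scalemxAl mxE mulmxA -/y -mulmxA.
  have -> : adjmx v *m x = adjmx y by rewrite adjmxM adjmxK.
  by rewrite mxE big_ord1 !mxE normCK.
by rewrite mulr_ge0 ?exprn_ge0.
Qed.

Section MaxEntangled.
Variables (C : numClosedFieldType) (d : nat).
Hypothesis d_gt0 : (0 < d)%N.

(* Omega = sum_i e_i (x) e_i, in the mxvec_index encoding of C^d (x) C^d. *)
Definition maxent_vec : 'cV[C]_(d * d) :=
  \col_k ((split_idx k).1 == (split_idx k).2)%:R.

Definition maxent_state : 'M[C]_(d * d) :=
  d%:R^-1 *: (maxent_vec *m adjmx maxent_vec).

Lemma maxent_stateE i a j b : maxent_state (mxvec_index i a) (mxvec_index j b) =
  d%:R^-1 * ((i == a)%:R * (j == b)%:R).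
Proof. by rewrite !mxE big_ord1 !mxE !split_idx_mxvec conjC_nat. Qed.

Lemma natr_d_neq0 : (d%:R : C) != 0.
Proof. by rewrite pnatr_eq0 -lt0n. Qed.

Lemma maxent_state_is_state : is_state maxent_state.
Proof.
split; first by apply: psd_scale_rank_one; rewrite invr_ge0 ler0n.
rewrite /mxtrace big_mxvec_index.
under eq_bigr => i _ do under eq_bigr => j _ do rewrite maxent_stateE.
transitivity (\sum_(i < d) (d%:R^-1 : C)); last first.
  by rewrite sumr_const card_ord -(mulr_natl d%:R^-1) mulfV ?natr_d_neq0.
apply: eq_bigr => i _; rewrite (bigD1 i) //= eqxx big1 ?addr0 ?mulr1 //.
by move=> j /negbTE; rewrite eq_sym => ->; rewrite mul0r mulr0.
Qed.

Lemma blockA_maxent_state a b : blockA maxent_state a b = d%:R^-1 *: delta_mx a b.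
Proof.
apply/matrixP => i j; rewrite [LHS]mxE maxent_stateE !mxE.
by case: (i == a); case: (j == b); rewrite /= ?mul1r ?mul0r ?mulr1 ?mulr0.
Qed.

End MaxEntangled.

Section Pairing.
Variables (C : numClosedFieldType) (d : nat).

(* <B, X> = tr (X B^T): bilinear, not sesquilinear, which is why the effects B_t
   are controlled by the complex conjugate of the eigenbasis of rho below. *)
Definition mxpair (B X : 'M[C]_d) : C := (mxvec X *m (mxvec B)^T) 0 0.

Lemma mxpairE B X : mxpair B X = \sum_a \sum_b X a b * B a b.
Proof.
rewrite /mxpair mxE big_mxvec_index; apply: eq_bigr => a _; apply: eq_bigr => b _.
by rewrite !mxE !mxvecE.
Qed.

Lemma lin_mx_pair_sum (phi : {linear 'M[C]_d -> 'M[C]_d}) (I : Type) (s : seq I)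
  (c : I -> C) (A B : I -> 'M[C]_d) :
  (forall X, phi X = \sum_(t <- s) (c t * mxpair (B t) X) *: A t) ->
  lin_mx phi = \sum_(t <- s) c t *: ((mxvec (B t))^T *m mxvec (A t)).
Proof.
move=> phiE; apply/row_matrixP => k; rewrite !rowE.
set u := delta_mx 0 k.
rewrite -{1}(vec_mxK u) mul_vec_lin phiE linear_sum mulmx_sumr /=.
apply: eq_bigr => t _; rewrite linearZ /= -scalemxAr mulmxA.
by rewrite [u *m _]mx11_scalar mul_scalar_mx scalerA /mxpair vec_mxK mulrC.
Qed.

Hypothesis d_gt0 : (0 < d)%N.

Lemma choi_decomposition (phi : {linear 'M[C]_d -> 'M[C]_d})
    (s : seq (C * 'M[C]_d * 'M[C]_d)) :
  ampl phi (maxent_state C d) = \sum_(t <- s) t.1.1 *: tensmx t.1.2 t.2 ->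
  forall X, phi X = \sum_(t <- s) (d%:R * t.1.1 * mxpair t.2 X) *: t.1.2.
Proof.
move=> choiE.
have phi_delta a b i j : phi (delta_mx a b) i j =
    d%:R * \sum_(t <- s) t.1.1 * (t.1.2 i j * t.2 a b).
  have := congr1 (fun M : 'M[C]_(d * d) => M (mxvec_index i a) (mxvec_index j b)) choiE.
  rewrite /= mxE !split_idx_mxvec /= blockA_maxent_state linearZ mxE summxE => phiE.
  have dn0 := natr_d_neq0 C d_gt0.
  apply: (mulfI (invr_neq0 dn0)); rewrite phiE mulrA mulVf // mul1r.
  apply: eq_bigr => t _.
  by rewrite !mxE !split_idx_mxvec.
move=> X; apply/matrixP => i j.
rewrite [in LHS](matrix_sum_delta X) linear_sum summxE.
under eq_bigr => a _ do rewrite linear_sum summxE.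
under eq_bigr => a _ do under eq_bigr => b _ do
  rewrite linearZ mxE phi_delta big_distrr /= big_distrr /=.
rewrite summxE.
under [RHS]eq_bigr => t _ do rewrite mxE mxpairE big_distrr /= big_distrl /=.
rewrite [RHS]exchange_big /=; apply: eq_bigr => a _.
under [RHS]eq_bigr => t _ do rewrite big_distrr /= big_distrl /=.
rewrite [RHS]exchange_big /=; apply: eq_bigr => b _.
by apply: eq_bigr => t _; ring.
Qed.

End Pairing.

Section HolevoForm.
Variables (C : numClosedFieldType) (d : nat).

Definition holevo_form (phi : 'M[C]_d -> 'M[C]_d) (s : seq (C * 'M[C]_d * 'M[C]_d)) :=
  (forall t, t \in s -> [/\ 0 <= t.1.1, psd t.1.2 & psd t.2]) /\
  forall X, phi X = \sum_(t <- s) (t.1.1 * mxpair t.2 X) *: t.1.2.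

Lemma entanglement_breaking_holevo_form (phi : {linear 'M[C]_d -> 'M[C]_d}) :
  (0 < d)%N -> entanglement_breaking phi -> exists s, holevo_form phi s.
Proof.
move=> d_gt0 [_ eb]; have [s [s_states choiE]] := eb d _ (maxent_state_is_state C d_gt0).
exists [seq (d%:R * t.1.1, t.1.2, t.2) | t <- s]; split.
  move=> _ /mapP[t ts ->]; have [t_ge0 [[At _] [Bt _]]] := s_states t ts.
  by split; rewrite // mulr_ge0 ?ler0n.
by move=> X; rewrite big_map (choi_decomposition d_gt0 choiE).
Qed.

End HolevoForm.

Section FixedPoint.
Variables (C : numClosedFieldType) (d : nat) (s : seq (C * 'M[C]_d * 'M[C]_d)).
Variables (P : 'M[C]_d) (lam : 'rV[C]_d).
Hypotheses (PhP : adjmx P *m P = 1%:M) (PPh : P *m adjmx P = 1%:M).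
Hypothesis s_psd : forall t, t \in s -> [/\ 0 <= t.1.1, psd t.1.2 & psd t.2].

Local Notation rho := (adjmx P *m diag_mx lam *m P).
Local Notation Pc := (map_mx Num.conj P).
Local Notation supp := [pred j | lam 0 j != 0].
Local Notation null := [pred j | lam 0 j == 0].

Hypothesis rho_psd : psd rho.
Hypothesis rho_fixed : rho = \sum_(t <- s) (t.1.1 * mxpair t.2 rho) *: t.1.2.

Lemma mxpair_unitary_diag (M : 'M[C]_d) :
  mxpair M rho = \sum_j lam 0 j * qform M (adjmx (row j Pc)).
Proof.
have rhoE a b : rho a b = \sum_k (P k a)^* * lam 0 k * P k b.
  by rewrite mul_mx_diag mxE; apply: eq_bigr => k _; rewrite !mxE.
rewrite mxpairE.
under eq_bigr => a _ do under eq_bigr => b _ do rewrite rhoE big_distrl /=.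
under [RHS]eq_bigr => j _ do rewrite /qform mxE big_distrr /=.
under eq_bigr => a _ do rewrite exchange_big /=.
rewrite exchange_big /=; apply: eq_bigr => j _.
rewrite exchange_big /=; apply: eq_bigr => b _.
rewrite mxE big_distrl /= big_distrr /=; apply: eq_bigr => a _.
by rewrite adjmx_conj_row !mxE; ring.
Qed.

Lemma mxpair_rho_ge0 M : psd M -> 0 <= mxpair M rho.
Proof.
move=> M_psd; rewrite mxpair_unitary_diag; apply: sumr_ge0 => j _.
by rewrite mulr_ge0 ?(unitary_diag_psd_ge0 PPh) //; exact: M_psd.2.
Qed.

Lemma output_annihilates_null t j : t \in s -> t.1.1 * mxpair t.2 rho != 0 -> lam 0 j = 0 ->
  t.1.2 *m adjmx (row j P) = 0.
Proof.
move=> ts tn0 lam0; have [_ At _] := s_psd ts; apply: psd_ker => //.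
have : qform rho (adjmx (row j P)) = 0 by rewrite qform_unitary_diag_row.
rewrite {1}rho_fixed qform_sum big_seq_cond => /eqP; rewrite psumr_eq0.
  by move/allP/(_ t ts); rewrite ts mulf_eq0 (negbTE tn0) => /eqP.
move=> u /andP[us _]; have [u_ge0 Au Bu] := s_psd us.
by rewrite !mulr_ge0 ?mxpair_rho_ge0 //; exact: Au.2.
Qed.

Lemma effect_annihilates_supp t j : t \in s -> mxpair t.2 rho = 0 -> lam 0 j != 0 ->
  t.2 *m adjmx (row j Pc) = 0.
Proof.
move=> ts pair0 lam_n0; have [_ _ Bt] := s_psd ts; apply: psd_ker => //.
move: pair0; rewrite mxpair_unitary_diag => /psumr_eq0P sum0.
have lam_ge0 k := unitary_diag_psd_ge0 PPh k rho_psd.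
have /eqP := sum0 (fun k _ => mulr_ge0 (lam_ge0 k) (Bt.2 _)) j isT.
by rewrite mulf_eq0 (negbTE lam_n0) => /eqP.
Qed.

Lemma mxrank_holevo_le :
  (\rank (\sum_(t <- s) t.1.1 *: ((mxvec t.2)^T *m mxvec t.1.2))%R
     <= #|supp| ^ 2 + #|null| ^ 2)%N.
Proof.
rewrite (bigID (fun t => mxpair t.2 rho == 0)) /= !expnS !expn0 !muln1.
apply: leq_trans (mxrank_add _ _) _; rewrite addnC leq_add //.
  apply: leq_trans (mxrank_frame_space P _); apply: mxrankS.
  rewrite big_seq_cond; apply: summx_sub => t /andP[ts pair_n0].
  have [-> | c_n0] := eqVneq t.1.1 0; first by rewrite scale0r sub0mx.
  have [_ [At _] _] := s_psd ts.
  apply/scalemx_sub/mulmx_sub/hermitian_sub_frame_space => // j; rewrite negbK.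
  by move/eqP; apply: output_annihilates_null; rewrite // mulf_neq0.
rewrite -mxrank_tr; apply: leq_trans (mxrank_frame_space Pc _); apply: mxrankS.
rewrite raddf_sum big_seq_cond; apply: summx_sub => t /andP[ts /eqP pair0].
have [_ _ [Bt _]] := s_psd ts.
rewrite /= linearZ /= trmx_mul trmxK.
apply/scalemx_sub/mulmx_sub/hermitian_sub_frame_space => //.
  exact: adjmx_unitaryC.
by move=> j; apply: effect_annihilates_supp.
Qed.

End FixedPoint.

Lemma sqrnD_ge_sum_sqr a b : (0 < a)%N -> (0 < b)%N ->
  (a ^ 2 + b ^ 2 + 2 * (a + b - 1) <= (a + b) ^ 2)%N.
Proof. by case: a => // a; case: b => // b; nia. Qed.

Lemma card_neq0_add_eq0 (T : finType) (R : nmodType) (f : T -> R) :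
  addn #|[pred x | f x != 0]| #|[pred x | f x == 0]| = #|T|.
Proof.
rewrite -(cardC [pred x | f x != 0]); congr (_ + _)%N.
by apply: eq_card => x; rewrite !inE negbK.
Qed.

Theorem mainTheorem5 (C : numClosedFieldType) (d : nat)
  (phi : {linear 'M[C]_d -> 'M[C]_d}) :
  entanglement_breaking phi ->
  (exists rho : 'M[C]_d, rho != 0 /\ semipositive rho /\ phi rho = rho) ->
  (2 * (d - 1) <= dim_ker phi)%N /\ det_ch phi = 0.
Proof.
move=> eb [rho [rho_n0 [[rho_psd rho_sing] rho_fixed]]].
have [P [lam [PhP PPh rhoE]]] := hermitian_unitary_diag rho_psd.1.
subst rho.
have supp_gt0 := unitary_diag_supp_gt0 rho_n0.
have null_gt0 := unitary_diag_null_gt0 PhP rho_sing.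
have card_split := card_neq0_add_eq0 (lam 0); rewrite card_ord in card_split.
have d_ge2 : (1 < d)%N by rewrite -card_split (leq_add supp_gt0 null_gt0).
have [s [s_psd phiE]] := entanglement_breaking_holevo_form (ltnW d_ge2) eb.
have := rho_fixed; rewrite phiE => /esym rho_holevo.
have := mxrank_holevo_le PhP PPh s_psd rho_psd rho_holevo.
rewrite -(lin_mx_pair_sum phiE) -/(chmx phi) => rank_le.
have := sqrnD_ge_sum_sqr supp_gt0 null_gt0; rewrite card_split => sqr_le.
have dim_ker_ge : (2 * (d - 1) <= dim_ker phi)%N by rewrite /dim_ker mxrank_ker; lia.
split=> //; apply/eqP/contraT => det_n0.
have /mxrank_unit : chmx phi \in unitmx by rewrite unitmxE unitfE.
by move: dim_ker_ge; rewrite /dim_ker mxrank_ker; lia.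
Qed.
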